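(* Let $\mathcal{K}=(\mathcal{T},\mathcal{A})$ be a $\mathcal{SHIQ}$ ontology and let $\mathbf{S}$ be a set of individual names. For each $i\in\mathbf{S}$ let $\mathcal{M}_{\{i\}}\subseteq\mathcal{A}$ be an ABox module for the signature $\{i\}$, and put $\mathcal{M}_{\mathbf{S}}=\bigcup_{i\in\mathbf{S}}\mathcal{M}_{\{i\}}$. Then $\mathcal{M}_{\mathbf{S}}$ is an ABox module for $\mathbf{S}$.
   Context: A $\mathcal{SHIQ}$ ontology $\mathcal{K}=(\mathcal{T},\mathcal{A})$ consists of a TBox $\mathcal{T}$ (role inclusion axioms $R_1\sqsubseteq R_2$, transitivity declarations, and general concept inclusions $C\sqsubseteq D$ between $\mathcal{SHIQ}$ concepts) and an ABox $\mathcal{A}$ (a finite set of assertions $C(a)$, $R(a,b)$, $a\not\approx b$ with $a,b$ individual names and $R$ a role name or the inverse of a role name). Entailment convention: throughout, $\mathcal{K}\models\alpha$ means that $\alpha$ is a justifiable entailment of $\mathcal{K}$, i.e. there is a subset $\mathcal{K}'\subseteq\mathcal{K}$ that is consistent (has a model) and classically entails $\alpha$ (every model of $\mathcal{K}'$ satisfies $\alpha$). For an assertion $\gamma$, $Sig(\gamma)$ is the set of individual names occurring in $\gamma$. ABox module: given a set $\mathbf{S}$ of individual names, a subset $\mathcal{M}_{\mathbf{S}}\subseteq\mathcal{A}$ is an ABox module for $\mathbf{S}$ iff for every assertion $\gamma$ that is either a class assertion $A(a)$ with $A$ an atomic concept name or a property assertion $R(a,b)$ with $R$ a role or inverse role,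 and with $Sig(\gamma)\cap\mathbf{S}\neq\emptyset$, we have $(\mathcal{T},\mathcal{M}_{\mathbf{S}})\models\gamma$ iff $\mathcal{K}\models\gamma$. *)

From Stdlib Require Import List.
Import ListNotations.
Set Implicit Arguments.

Section SHIQ.
Variables NC NR NI : Type.

Inductive role : Type :=
| RName : NR -> role
| RInv  : NR -> role.

Definition inv (R : role) : role :=
  match R with RName r => RInv r | RInv r => RName r end.

Inductive concept : Type :=
| CTop : concept
| CBot : concept
| CAtom : NC -> concept
| CNot : concept -> concept
| CAnd : concept -> concept -> concept
| COr  : concept -> concept -> concept
| CEx  : role -> concept -> concept
| CAll : role -> concept -> concept
| CAtLeast : nat -> role -> concept -> concept
| CAtMost  : nat -> role -> concept -> concept.

Inductive taxiom : Type :=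
| RIA   : role -> role -> taxiom
| Trans : role -> taxiom
| GCI   : concept -> concept -> taxiom.

Inductive assertion : Type :=
| ACls  : concept -> NI -> assertion
| ARole : role -> NI -> NI -> assertion
| ANeq  : NI -> NI -> assertion.

(* Interpretations (no unique name assumption; non-empty domain) *)
Record interp : Type := {
  dom : Type;
  dom_inhabited : inhabited dom;
  iC : NC -> dom -> Prop;
  iR : NR -> dom -> dom -> Prop;
  iI : NI -> dom
}.

Definition role_i (I : interp) (R : role) : dom I -> dom I -> Prop :=
  match R with
  | RName r => iR I r
  | RInv r => fun x y => iR I r y x
  end.

Definition atleast (I : interp) (n : nat) (R : role) (C : dom I -> Prop)
  (x : dom I) : Prop :=
  exists l : list (dom I),
    length l = n /\ NoDup l /\ (forall y, In y l -> role_i I R x y /\ C y).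

Fixpoint concept_i (I : interp) (C : concept) : dom I -> Prop :=
  match C with
  | CTop => fun _ => True
  | CBot => fun _ => False
  | CAtom A => iC I A
  | CNot D => fun x => ~ concept_i I D x
  | CAnd D E => fun x => concept_i I D x /\ concept_i I E x
  | COr D E => fun x => concept_i I D x \/ concept_i I E x
  | CEx R D => fun x => exists y, role_i I R x y /\ concept_i I D y
  | CAll R D => fun x => forall y, role_i I R x y -> concept_i I D y
  | CAtLeast n R D => atleast I n R (concept_i I D)
  | CAtMost n R D => fun x => ~ atleast I (S n) R (concept_i I D) x
  end.

Definition sat_taxiom (I : interp) (ax : taxiom) : Prop :=
  match ax with
  | RIA R1 R2 => forall x y, role_i I R1 x y -> role_i I R2 x y
  | Trans R => forall x y z, role_i I R x y -> role_i I R y z -> role_i I R x z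
  | GCI C D => forall x, concept_i I C x -> concept_i I D x
  end.

Definition sat_assertion (I : interp) (a : assertion) : Prop :=
  match a with
  | ACls C a => concept_i I C (iI I a)
  | ARole R a b => role_i I R (iI I a) (iI I b)
  | ANeq a b => iI I a <> iI I b
  end.

Definition tbox := taxiom -> Prop.
Definition abox := assertion -> Prop.

Definition is_model (I : interp) (T : tbox) (A : abox) : Prop :=
  (forall ax, T ax -> sat_taxiom I ax) /\ (forall a, A a -> sat_assertion I a).

Definition consistent (T : tbox) (A : abox) : Prop :=
  exists I : interp, is_model I T A.

Definition classically_entails (T : tbox) (A : abox) (g : assertion) : Prop :=
  forall I : interp, is_model I T A -> sat_assertion I g.

(* Justifiable entailment: some consistent sub-ontology classically entails g. *)
Definition entails (T : tbox) (A : abox) (g : assertion) : Prop :=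
  exists (T' : tbox) (A' : abox),
    (forall ax, T' ax -> T ax) /\ (forall a, A' a -> A a) /\
    consistent T' A' /\ classically_entails T' A' g.

Inductive query : Type :=
| QCls : NC -> NI -> query
| QRole : role -> NI -> NI -> query.

Definition query_assertion (q : query) : assertion :=
  match q with
  | QCls A a => ACls (CAtom A) a
  | QRole R a b => ARole R a b
  end.

Definition Sig (q : query) : list NI :=
  match q with
  | QCls _ a => [a]
  | QRole _ a b => [a; b]
  end.

Definition abox_module (T : tbox) (A : abox) (S : NI -> Prop) (M : abox) : Prop :=
  (forall a, M a -> A a) /\
  forall q : query, (exists i, In i (Sig q) /\ S i) ->
    (entails T M (query_assertion q) <-> entails T A (query_assertion q)).

Inductive sub_star (T : list taxiom) : role -> role -> Prop :=
| sub_refl : forall R, sub_star T R R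
| sub_step : forall R1 R2 R3, In (RIA R1 R2) T -> sub_star T R2 R3 -> sub_star T R1 R3
| sub_step_inv : forall R1 R2 R3, In (RIA R1 R2) T ->
    sub_star T (inv R2) R3 -> sub_star T (inv R1) R3.

Definition transitive_role (T : list taxiom) (R : role) : Prop :=
  In (Trans R) T \/ In (Trans (inv R)) T.

Definition simple_role (T : list taxiom) (R : role) : Prop :=
  forall S, sub_star T S R -> ~ transitive_role T S.

Fixpoint wf_concept (T : list taxiom) (C : concept) : Prop :=
  match C with
  | CTop | CBot | CAtom _ => True
  | CNot D => wf_concept T D
  | CAnd D E | COr D E => wf_concept T D /\ wf_concept T E
  | CEx _ D | CAll _ D => wf_concept T D
  | CAtLeast _ R D | CAtMost _ R D => simple_role T R /\ wf_concept T D
  end.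

Definition SHIQ_ontology (T : list taxiom) (A : list assertion) : Prop :=
  (forall C D, In (GCI C D) T -> wf_concept T C /\ wf_concept T D) /\
  (forall C a, In (ACls C a) A -> wf_concept T C).

End SHIQ.

Arguments RName {NR}.
Arguments RInv {NR}.

(* Justifiable entailment is monotone in the ABox, and the union of the
   modules lies between each single-individual module and the whole ABox.
   An entailment from the union is therefore one from the ABox; conversely an
   entailment from the ABox about some i in S is already one from the module
   of {i}, hence from the union. *)
From Stdlib Require Import List.

Section AboxModules.
Variables NC NR NI : Type.

Lemma entails_abox_mono (T : tbox NC NR) (A1 A2 : abox NC NR NI)
    (g : assertion NC NR NI) :
  (forall a, A1 a -> A2 a) -> entails T A1 g -> entails T A2 g.
Proof.
intros HA12 [T' [A' [HT' [HA' [Hcons Hent]]]]].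
exists T', A'; repeat split; auto.
Qed.

Lemma abox_module_union (T : tbox NC NR) (A : abox NC NR NI) (S : NI -> Prop)
    (M : NI -> abox NC NR NI) :
  (forall i, S i -> abox_module T A (fun j => j = i) (M i)) ->
  abox_module T A S (fun a => exists i, S i /\ M i a).
Proof.
intros HM; split.
- intros a [i [Si Mia]].
  exact (proj1 (HM i Si) a Mia).
- intros q [i [Hi Si]]; split.
  + apply entails_abox_mono.
    intros a [j [Sj Mja]].
    exact (proj1 (HM j Sj) a Mja).
  + intros HA.
    assert (HMi : entails T (M i) (query_assertion q)).
    { apply (proj2 (HM i Si) q); [exists i; auto | exact HA]. }
    revert HMi; apply entails_abox_mono.
    intros a Mia; exists i; auto.
Qed.

End AboxModules.

Theorem proposition1 (NC NR NI : Type)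
  (T : list (taxiom NC NR)) (A : list (assertion NC NR NI))
  (HK : SHIQ_ontology T A)
  (S : NI -> Prop)
  (M : NI -> assertion NC NR NI -> Prop)
  (HM : forall i, S i ->
     abox_module (fun ax => In ax T) (fun a => In a A) (fun j => j = i) (M i)) :
  abox_module (fun ax => In ax T) (fun a => In a A) S
    (fun a => exists i, S i /\ M i a).
Proof.
apply abox_module_union; exact HM.
Qed.
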